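(* Let $n>1$, $j_0,\dots,j_{n-1}\in\mathbb Z/(n)$ with $j_i=j_{-i}$ for all $i$, and let $B=B_{j_0,\dots,j_{n-1}}$, $X$ and $r_{j_0,\dots,j_{n-1}}$ be as in the context. Then $(X,r_{j_0,\dots,j_{n-1}})$ is a solution of the YBE, and: (a) it is indecomposable if and only if the additive subgroup of $\mathbb Z/(n)$ generated by $j_0,\dots,j_{n-1}$ is $\mathbb Z/(n)$; (b) it is irretractable if and only if the $n$ rows of the matrix $(j_{l-k})_{k,l\in\mathbb Z/(n)}$ are pairwise distinct, i.e. if $i,i'\in\mathbb Z/(n)$ satisfy $j_{i+k}=j_{i'+k}$ for every $k$, then $i=i'$.
   Context: Let $n>1$ and let $e_i$ ($i\in\mathbb Z/(n)$) be the standard basis of the free $\mathbb Z/(n)$-module $(\mathbb Z/(n))^n$, indices in $\mathbb Z/(n)$. Let $\alpha:\mathbb Z/(n)\to\mathrm{Aut}((\mathbb Z/(n))^n)$, $\alpha(i)(e_k)=e_{i+k}$. Given $j_0,\dots,j_{n-1}\in\mathbb Z/(n)$ with $j_i=j_{-i}$, let $b=b_{j_0,\dots,j_{n-1}}$ be the bilinear form on $(\mathbb Z/(n))^n$ with $b(e_k,e_l)=j_{l-k}$. $B_{j_0,\dots,j_{n-1}}$ is the set $(\mathbb Z/(n))^n\times\mathbb Z/(n)$ with multiplication $(u,i)\circ(v,j)=(u+\alpha(i)(v),i+j)$ and addition $(u,i)+(v,j)=(u+v,i+j+b(u,v))$; this is a left brace (a set with abelian group $+$ and group $\circ$ satisfying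 $a\circ(b+c)+a=a\circ b+a\circ c$), with lambda map $\lambda_{(u,i)}(v,j)=-(u,i)+(u,i)\circ(v,j)=(\alpha(i)(v),\ j-b(u,\alpha(i)(v)))$. Let $x_{ij}=(e_i,j)$ and $X=\{x_{ij}: i,j\in\mathbb Z/(n)\}$; then $\lambda_{x_{ij}}(x_{kl})=x_{k+j,\ l-j_{k+j-i}}$. Define $r_{j_0,\dots,j_{n-1}}:X\times X\to X\times X$ by $r(x,y)=(\lambda_x(y),\lambda^{-1}_{\lambda_x(y)}(x))$. A solution of the YBE is a pair $(X,r)$, $r(x,y)=(\sigma_x(y),\gamma_y(x))$, with $r^2=\mathrm{id}$, all $\sigma_x,\gamma_x$ bijective, and $r_{12}r_{23}r_{12}=r_{23}r_{12}r_{23}$; indecomposable means $\langle\sigma_x\rangle\le\mathrm{Sym}_X$ is transitive; irretractable means $\sigma_x\ne\sigma_y$ for $x\ne y$. *)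

From HB Require Import structures.
From mathcomp Require Import all_boot all_order all_algebra all_fingroup.
Set Implicit Arguments. Unset Strict Implicit. Unset Printing Implicit Defensive.
Import GRing.Theory.

Section YBE.
Variable X : finType.
Implicit Types r : X -> X -> X * X.

Definition sigma r (x : X) : X -> X := fun y => (r x y).1.
Definition gamma r (y : X) : X -> X := fun x => (r x y).2.

Definition r_pair r (p : X * X) : X * X := r p.1 p.2.
Definition r12 r (t : X * X * X) : X * X * X :=
  let: (x, y, z) := t in let: (a, b) := r x y in (a, b, z).
Definition r23 r (t : X * X * X) : X * X * X :=
  let: (x, y, z) := t in let: (a, b) := r y z in (x, a, b).

(* (X,r) is an (involutive, non-degenerate) solution of the YBE *)
Definition is_solution r : Prop :=
  [/\ (forall p, r_pair r (r_pair r p) = p),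
      (forall x, bijective (sigma r x)),
      (forall y, bijective (gamma r y)) &
      (forall t, r12 r (r23 r (r12 r t)) = r23 r (r12 r (r23 r t)))].

Definition sigma_set r : {set {perm X}} :=
  [set s : {perm X} | [exists x, [forall y, s y == sigma r x y]]].

Definition indecomposable r : Prop :=
  [transitive <<sigma_set r>>, on [set: X] | 'P].

Definition irretractable r : Prop :=
  forall x y : X, x <> y -> sigma r x <> sigma r y.
End YBE.

Section Brace.
Local Open Scope ring_scope.
Variable n : nat.
Variable j : 'Z_n -> 'Z_n.

Definition brace := ({ffun 'Z_n -> 'Z_n} * 'Z_n)%type.

Definition ebase (i : 'Z_n) : {ffun 'Z_n -> 'Z_n} := [ffun k => (k == i)%:R].

(* alpha(i)(e_k) = e_{i+k}, i.e. alpha(i)(v)(m) = v(m - i) *)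
Definition alpha (i : 'Z_n) (v : {ffun 'Z_n -> 'Z_n}) : {ffun 'Z_n -> 'Z_n} :=
  [ffun m => v (m - i)].

(* bilinear form with b(e_k, e_l) = j_{l-k} *)
Definition bform (u v : {ffun 'Z_n -> 'Z_n}) : 'Z_n :=
  \sum_(k : 'Z_n) \sum_(l : 'Z_n) u k * v l * j (l - k).

Definition lam (a c : brace) : brace :=
  (alpha a.2 c.1, c.2 - bform a.1 (alpha a.2 c.1)).

(* inverse of lambda_a (lambda_a is a bijection of the finite set B) *)
Definition lam_inv (a c : brace) : brace := odflt c [pick d | lam a d == c].

(* X = { x_{ij} = (e_i, j) }, indexed by pairs (i,j) *)
Definition Xset := ('Z_n * 'Z_n)%type.
Definition emb (x : Xset) : brace := (ebase x.1, x.2).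
Definition proj (w : brace) : Xset := (odflt 0 [pick i | w.1 == ebase i], w.2).

Definition r_brace (x y : Xset) : Xset * Xset :=
  let u := lam (emb x) (emb y) in (proj u, proj (lam_inv u (emb x))).
End Brace.

(* Everything rests on an explicit formula for r = r_{j_0,...,j_{n-1}} on the
   generators x_{ia} = (e_i, a).  Since lambda_{x_{ia}}(x_{kl}) = x_{k+a, l-J}
   with J = j_{k+a-i}, we get
       sigma_{x_{ia}}(x_{kl}) = x_{k+a, l-J},
       gamma_{x_{kl}}(x_{ia}) = x_{i-l+J, a+J},
   the second formula using the symmetry j_i = j_{-i}.  Involutivity, the
   braid relation and bijectivity of sigma, gamma are then identities in Z/(n).
   For indecomposability, with H the subgroup generated by the j_i: every
   sigma_x moves the second coordinate by an element of H, hence so does the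
   whole group <sigma_x>, which gives the direct implication; conversely the
   orbit of x_{00} meets every column (via sigma_{x_{01}}) and is stable under
   shifting the second coordinate by any j_m (via sigma_{x_{k-m,0}}), hence
   by all of H = Z/(n). *)

From mathcomp Require Import all_boot all_order all_algebra all_fingroup.
From mathcomp Require Import ring.
From Stdlib Require Import FunctionalExtensionality.
Set Implicit Arguments. Unset Strict Implicit. Unset Printing Implicit Defensive.
Import GRing.Theory.
Local Open Scope ring_scope.

Lemma r12_triple (T : finType) (r : T -> T -> T * T) x y z :
  r12 r (x, y, z) = ((r x y).1, (r x y).2, z).
Proof. by rewrite /r12; case: (r x y). Qed.

Lemma r23_triple (T : finType) (r : T -> T -> T * T) x y z :
  r23 r (x, y, z) = (x, (r y z).1, (r y z).2).
Proof. by rewrite /r23; case: (r y z). Qed.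

Section BraceOnGenerators.
Variables (n : nat) (j : 'Z_n -> 'Z_n).

Lemma ebase_inj : injective (@ebase n).
Proof.
move=> a b /ffunP /(_ a); rewrite !ffunE eqxx.
by case: eqVneq => // _ /eqP; rewrite eq_sym oner_eq0.
Qed.

Lemma alpha_ebase (q v : 'Z_n) : alpha q (ebase v) = ebase (v + q).
Proof. by apply/ffunP => m; rewrite !ffunE subr_eq. Qed.

Lemma alpha_inj (q : 'Z_n) : injective (@alpha n q).
Proof.
move=> u v /ffunP uv; apply/ffunP => m.
by have := uv (m + q); rewrite !ffunE addrK.
Qed.

Lemma bform_ebase (p c : 'Z_n) : bform j (ebase p) (ebase c) = j (c - p).
Proof.
rewrite /bform (bigD1 p) //= [X in _ + X]big1; last first.
  by move=> k /negbTE kp; apply: big1 => l _; rewrite !ffunE kp !mul0r.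
rewrite addr0 (bigD1 c) //= [X in _ + X]big1; last first.
  by move=> l /negbTE lc; rewrite !ffunE lc mulr0 mul0r.
by rewrite !ffunE !eqxx !mul1r addr0.
Qed.

Lemma proj_emb (x : Xset n) : proj (emb x) = x.
Proof.
case: x => i a; rewrite /proj /emb /=.
case: pickP => [i' /eqP /ebase_inj -> // | none].
by have := none i; rewrite eqxx.
Qed.

Lemma lam_inj (u : brace n) : injective (lam j u).
Proof.
case=> v t [v' t'] e.
have /= /alpha_inj ev := f_equal fst e; subst v'.
by have /= /addIr -> := f_equal snd e.
Qed.

Lemma lam_invE (u c d : brace n) : lam j u d = c -> lam_inv j u c = d.
Proof.
move=> ud; rewrite /lam_inv; case: pickP => [d' /eqP | /(_ d)].
  by rewrite -ud => /lam_inj.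
by rewrite ud eqxx.
Qed.

Lemma lam_emb (i a k l : 'Z_n) :
  lam j (emb (i, a)) (emb (k, l)) = emb (k + a, l - j (k + a - i)).
Proof. by rewrite /lam /emb /= alpha_ebase bform_ebase. Qed.

Lemma sigma_brace (i a k l : 'Z_n) :
  sigma (r_brace j) (i, a) (k, l) = (k + a, l - j (k + a - i)).
Proof. by rewrite /sigma /r_brace /= lam_emb proj_emb. Qed.

Lemma sigma_brace_bij x : bijective (sigma (r_brace j) x).
Proof.
case: x => i a; exists (fun w : Xset n => (w.1 - a, w.2 + j (w.1 - i))).
  by case=> k l; rewrite sigma_brace /= addrK subrK.
by case=> k l; rewrite sigma_brace /= subrK addrK.
Qed.

End BraceOnGenerators.

Section Solution.
Variables (n : nat) (j : 'Z_n -> 'Z_n).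
Hypothesis j_sym : forall i, j i = j (- i).

(* The second component
   needs the symmetry of j to identify lambda^{-1}.  It is stated for arbitrary
   x, y so that it rewrites nested occurrences of r. *)
Lemma r_brace_formula (x y : Xset n) :
  r_brace j x y =
  ((y.1 + x.2, y.2 - j (y.1 + x.2 - x.1)),
   (x.1 - (y.2 - j (y.1 + x.2 - x.1)), x.2 + j (y.1 + x.2 - x.1))).
Proof.
case: x y => i a [k l] /=; set J := j (k + a - i).
rewrite /r_brace /= lam_emb proj_emb.
rewrite (@lam_invE _ _ _ _ (emb (i - (l - J), a + J))) ?proj_emb //.
rewrite lam_emb subrK /J [j (i - _)]j_sym opprB addrK.
by congr (emb (_, _)).
Qed.

Lemma gamma_brace (i a k l : 'Z_n) :
  gamma (r_brace j) (k, l) (i, a) = (i - (l - j (k + a - i)), a + j (k + a - i)).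
Proof. by rewrite /gamma r_brace_formula. Qed.

Lemma r_brace_involutive p : r_pair (r_brace j) (r_pair (r_brace j) p) = p.
Proof.
case: p => [[i a] [k l]]; rewrite /r_pair !r_brace_formula /=.
set J := j (k + a - i).
have -> : j (i - (l - J) + (l - J) - (k + a)) = J.
  by rewrite j_sym /J; congr (j _); ring.
congr (_, _, (_, _)); ring.
Qed.

(* Both sides of the braid relation involve only the three values of j named
   P, Q, R below; after identifying them the relation is a ring identity. *)
Lemma r_brace_braid t :
  r12 (r_brace j) (r23 (r_brace j) (r12 (r_brace j) t)) =
  r23 (r_brace j) (r12 (r_brace j) (r23 (r_brace j) t)).
Proof.
case: t => [[[i1 a1] [i2 a2]] [i3 a3]].
rewrite !(r12_triple, r23_triple) !r_brace_formula /=.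
set P := j (i2 + a1 - i1); set Q := j (i3 + a2 + a1 - i1).
set R := j (i3 + a2 - i2).
have -> : j (i3 + (a1 + P) - (i1 - (a2 - P))) = Q by rewrite /Q; congr (j _); ring.
have -> : j (i3 + (a1 + P) + (a2 - P) - (i2 + a1)) = R.
  by rewrite /R; congr (j _); ring.
have -> : j (i2 - (a3 - R) + (a1 + Q) - (i1 - (a3 - R - Q))) = P.
  by rewrite /P; congr (j _); ring.
congr (_, _, (_, _), (_, _)); ring.
Qed.

Lemma gamma_brace_bij y : bijective (gamma (r_brace j) y).
Proof.
case: y => k l; pose J (w : Xset n) := j (k + w.2 - w.1 - l).
exists (fun w : Xset n => (w.1 + l - J w, w.2 - J w)) => [[i a] | [p q]].
  rewrite gamma_brace /J /=; set J0 := j (k + a - i).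
  have -> : j (k + (a + J0) - (i - (l - J0)) - l) = J0.
    by rewrite /J0; congr (j _); ring.
  congr pair; ring.
rewrite gamma_brace /J /=; set J0 := j (k + q - p - l).
have -> : j (k + (q - J0) - (p + l - J0)) = J0 by rewrite /J0; congr (j _); ring.
congr pair; ring.
Qed.

Lemma r_brace_solution : is_solution (r_brace j).
Proof.
split; [exact: r_brace_involutive | exact: sigma_brace_bij
       | exact: gamma_brace_bij | exact: r_brace_braid].
Qed.

End Solution.

Section Irretractable.
Variables (n : nat) (j : 'Z_n -> 'Z_n).

(* sigma_{x_{ia}} = sigma_{x_{i'a'}} iff a = a' and the rows of (j_{l-k})
   indexed by -i and -i' coincide *)
Lemma irretractable_brace : irretractable (r_brace j) <->
  (forall i i' : 'Z_n, (forall k, j (i + k) = j (i' + k)) -> i = i').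
Proof.
split.
  move=> irr i i' same_row; case: (eqVneq i i') => // ne; exfalso.
  apply: (irr (- i, 0) (- i', 0)).
    by move=> /(f_equal fst) /= /oppr_inj e; rewrite e eqxx in ne.
  apply: functional_extensionality => -[k l].
  by rewrite !sigma_brace addr0 !opprK (addrC k i) (addrC k i') same_row.
move=> rows [i a] [i' a'] ne same_sigma.
have on_pt y : sigma (r_brace j) (i, a) y = sigma (r_brace j) (i', a') y.
  by rewrite same_sigma.
have ea : a = a' by have := f_equal fst (on_pt (0, 0)); rewrite !sigma_brace !add0r.
subst a'; apply: ne; congr pair; apply: oppr_inj; apply: rows => k.
have := f_equal snd (on_pt (k - a, 0)); rewrite !sigma_brace /= subrK !sub0r.
by move/oppr_inj; rewrite !(addrC k).
Qed.

End Irretractable.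

Section Indecomposable.
Variable n : nat.

Lemma shift_in_group_set (T : finType) (f : T -> 'Z_n) (H : {group 'Z_n}) :
  group_set [set g : {perm T} | [forall x, f (g x) - f x \in H]].
Proof.
apply/group_setP; split.
  by rewrite inE; apply/forallP => x; rewrite perm1 subrr group1.
move=> g1 g2; rewrite !inE => /forallP H1 /forallP H2; apply/forallP => x.
rewrite permM (_ : _ - _ = (f (g2 (g1 x)) - f (g1 x)) + (f (g1 x) - f x)).
  exact: (groupM (H2 (g1 x)) (H1 x)).
ring.
Qed.

Lemma shift_stable_group_set (O : {set 'Z_n * 'Z_n}) :
  group_set [set h : 'Z_n | [forall y, (y \in O) ==> ((y.1, y.2 + h) \in O)]].
Proof.
apply/group_setP; split.
  by rewrite inE; apply/forallP => -[k l]; rewrite /= addr0 implybb.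
move=> h1 h2; rewrite !inE => /forallP H1 /forallP H2; apply/forallP => -[k l].
apply/implyP => yO; have /= y1 := implyP (H1 (k, l)) yO.
by have /= := implyP (H2 (k, l + h1)) y1; rewrite -addrA.
Qed.

Variable j : 'Z_n -> 'Z_n.
Let G := <<sigma_set (r_brace j)>>%g.
Let H := <<[set j i | i : 'Z_n]>>%g.

Definition sigma_perm (x : Xset n) : {perm Xset n} :=
  perm (bij_inj (sigma_brace_bij j x)).

Lemma sigma_permE x y : sigma_perm x y = sigma (r_brace j) x y.
Proof. by rewrite permE. Qed.

Lemma sigma_perm_in x : sigma_perm x \in G.
Proof.
apply: mem_gen; rewrite inE; apply/existsP; exists x; apply/forallP => y.
by rewrite sigma_permE.
Qed.

Lemma j_in_H m : j m \in H.
Proof. by apply: mem_gen; apply: imset_f. Qed.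

Lemma sigma_group_shift_in_H g x : g \in G -> (g x).2 - x.2 \in H.
Proof.
move=> Gg; pose K := Group (shift_in_group_set (fun y : Xset n => y.2) H).
suff /subsetP /(_ g Gg) : G \subset K by rewrite inE => /forallP.
rewrite gen_subG; apply/subsetP => s; rewrite inE => /existsP [[i a] /forallP sE].
rewrite inE; apply/forallP => -[k l]; rewrite (eqP (sE _)) sigma_brace /=.
by rewrite addrC addKr groupV j_in_H.
Qed.

Let O := orbit 'P G (0, 0).

Lemma orbit_sigma_stable x y : (sigma_perm x y \in O) = (y \in O).
Proof. by rewrite -apermE orbit_actr // sigma_perm_in. Qed.

(* sigma_{x_{01}} moves column m to column m+1, so O meets every column *)
Lemma orbit_meets_column (m : nat) : exists l, (m%:R, l) \in O.
Proof.
elim: m => [|m [l Ol]]; first by exists 0; exact: orbit_refl.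
exists (l - j (m%:R + 1 - 0)); rewrite -natr1.
by move: Ol; rewrite -(orbit_sigma_stable (0, 1)) sigma_permE sigma_brace.
Qed.

(* sigma_{x_{k-m,0}} shifts (k,l) to (k, l - j_m), so H stabilizes O *)
Lemma orbit_shift_stable h y : h \in H -> y \in O -> (y.1, y.2 + h) \in O.
Proof.
move=> Hh; pose S := Group (shift_stable_group_set O).
suff /subsetP /(_ h Hh) : H \subset S by rewrite inE => /forallP /(_ y) /implyP.
rewrite gen_subG; apply/subsetP => _ /imsetP [m _ ->]; rewrite inE.
apply/forallP => -[k l]; apply/implyP => /= kl.
rewrite -(orbit_sigma_stable (k - m, 0)) sigma_permE sigma_brace /=.
by rewrite addr0 opprB [k + _]addrC subrK addrK.
Qed.

Lemma indecomposable_brace : indecomposable (r_brace j) <-> H = [set: 'Z_n].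
Proof.
split.
  move=> trans; apply/eqP; rewrite eqEsubset subsetT /=; apply/subsetP => h _.
  have : ((0, h) : Xset n) \in O by rewrite /O (atransP trans) ?inE.
  case/orbitP => g Gg g0; have := sigma_group_shift_in_H (0, 0) Gg.
  by rewrite -apermE g0 /= subr0.
move=> HT; apply/imsetP; exists ((0, 0) : Xset n); first by rewrite inE.
apply/eqP; rewrite eqEsubset subsetT andbT; apply/subsetP => -[k l] _.
have [l0 Ol0] := orbit_meets_column k; rewrite natr_Zp in Ol0.
have shift_in_H : l - l0 \in H by rewrite HT in_setT.
by have /= := orbit_shift_stable shift_in_H Ol0; rewrite [l0 + _]subrKC.
Qed.

End Indecomposable.

Local Close Scope ring_scope.

Theorem mainTheorem13 (n : nat) (j : 'Z_n -> 'Z_n) :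
  1 < n ->
  (forall i : 'Z_n, j i = j (- i)%R) ->
  [/\ is_solution (r_brace j),
      (indecomposable (r_brace j) <->
         (<<[set j i | i : 'Z_n]>>%g = [set: 'Z_n])) &
      (irretractable (r_brace j) <->
         (forall i i' : 'Z_n, (forall k : 'Z_n, j (i + k)%R = j (i' + k)%R) -> i = i'))].
Proof.
(* the arguments hold for every 'Z_n *)
move=> _ j_sym; split.
- exact: r_brace_solution.
- exact: indecomposable_brace.
- exact: irretractable_brace.
Qed.
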